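(* Let $q$ be a prime power and $F/\mathbb{F}_q$ an algebraic function field with full constant field $\mathbb{F}_q$ of genus $g\geq 2$. For $n\geq 0$ let $A_n$ be the number of effective divisors of degree $n$ of $F$, for $r\geq1$ let $B_r$ be the number of places of degree $r$ of $F$, let $\Sigma_2=q^{g-1}\sum_{n=0}^{g-2}A_n/q^n$ and $\Delta_2=\{r:1\leq r\leq g-2,\ B_r\geq 1\}$. Then $$\Sigma_2\leq q^{g-1}\prod_{r\in\Delta_2}\left[\sum_{b=0}^{\lfloor\frac{g-2}{r}\rfloor}\frac{1}{q^{rb}}\binom{B_r+b-1}{b}\right].$$ *)

From HB Require Import structures.
From mathcomp Require Import all_boot all_order all_algebra.
From Stdlib Require List.
From Stdlib Require Import ClassicalEpsilon.
Set Implicit Arguments. Unset Strict Implicit. Unset Printing Implicit Defensive.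
Import Order.TTheory GRing.Theory Num.Theory.
Local Open Scope ring_scope.

Definition in_Kx (K : fieldType) (F : fieldType) (phi : {rmorphism K -> F})
  (x y : F) : Prop :=
  exists p r : {poly K}, (map_poly phi r).[x] != 0 /\
     y = (map_poly phi p).[x] / (map_poly phi r).[x].

(* F/K is an algebraic function field (of one variable): F is a finite
   extension of K(x) for some x transcendental over K. *)
Definition function_field (K : fieldType) (F : fieldType)
  (phi : {rmorphism K -> F}) : Prop :=
  exists x : F,
    (forall p : {poly K}, p != 0 -> (map_poly phi p).[x] != 0) /\
    exists (m : nat) (e : 'I_m -> F), forall y : F,
      exists c : 'I_m -> F, (forall i, in_Kx phi x (c i)) /\
        y = \sum_(i < m) c i * e i.

Definition full_constant_field (K : fieldType) (F : fieldType)
  (phi : {rmorphism K -> F}) : Prop :=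
  forall y : F, (exists p : {poly K}, p != 0 /\ root (map_poly phi p) y) ->
    exists c : K, y = phi c.

Definition valuation_ring (K : fieldType) (F : fieldType)
  (phi : {rmorphism K -> F}) (O : F -> Prop) : Prop :=
  [/\ (forall c, O (phi c)),
      (exists z, O z /\ forall c, z <> phi c),
      (exists z, ~ O z),
      (forall a b, O a -> O b -> O (a + b) /\ O (a * b) /\ O (- a))
    & (forall z, O z \/ O z^-1)].

(* Places are in bijection with valuation rings (P = maximal ideal of O_P);
   we represent a place by its valuation ring. *)
Record place (K : fieldType) (F : fieldType) (phi : {rmorphism K -> F}) := Place {
  vring : F -> Prop;
  vring_valuation : valuation_ring phi vring }.

(* the place itself: the maximal ideal (non-units) of the valuation ring *)
Definition in_place (K F : fieldType) (phi : {rmorphism K -> F})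
  (P : place phi) (z : F) : Prop :=
  vring P z /\ (z = 0 \/ ~ vring P z^-1).

(* the residue class field O_P/P has dimension n over K *)
Definition res_dim (K F : fieldType) (phi : {rmorphism K -> F})
  (P : place phi) (n : nat) : Prop :=
  exists e : 'I_n -> F,
    [/\ (forall i, vring P (e i)),
        (forall z, vring P z -> exists c : 'I_n -> K,
            in_place P (z - \sum_(i < n) phi (c i) * e i))
      & (forall c : 'I_n -> K, in_place P (\sum_(i < n) phi (c i) * e i) ->
            forall i, c i = 0)].

Definition deg_place (K F : fieldType) (phi : {rmorphism K -> F})
  (P : place phi) : nat :=
  epsilon (inhabits 0%N) (res_dim P).

Definition valuation_is (K F : fieldType) (phi : {rmorphism K -> F})
  (P : place phi) (z : F) (n : int) : Prop :=
  exists t u : F,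
    [/\ in_place P t, (forall w, in_place P w -> exists o, vring P o /\ w = t * o),
        vring P u, vring P u^-1 & z = t ^ n * u].

(* divisors: finitely supported functions place -> int *)
Definition divisor_fin (K F : fieldType) (phi : {rmorphism K -> F})
  (D : place phi -> int) : Prop :=
  exists s : seq (place phi), forall P, D P <> 0 -> List.In P s.

Definition div_deg (K F : fieldType) (phi : {rmorphism K -> F})
  (D : place phi -> int) : int :=
  epsilon (inhabits 0) (fun d : int => exists s : seq (place phi),
    [/\ List.NoDup s, (forall P, D P <> 0 -> List.In P s)
      & d = \sum_(P <- s) D P * (deg_place P)%:Z]).

Definition effective (K F : fieldType) (phi : {rmorphism K -> F})
  (D : place phi -> int) : Prop := forall P, 0 <= D P.

Definition RR_space (K F : fieldType) (phi : {rmorphism K -> F})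
  (A : place phi -> int) (z : F) : Prop :=
  z = 0 \/ forall P, exists n, valuation_is P z n /\ - A P <= n.

Definition lin_dim (K F : fieldType) (phi : {rmorphism K -> F})
  (S : F -> Prop) (n : nat) : Prop :=
  exists e : 'I_n -> F,
    [/\ (forall i, S (e i)),
        (forall z, S z -> exists c : 'I_n -> K, z = \sum_(i < n) phi (c i) * e i)
      & (forall c : 'I_n -> K, \sum_(i < n) phi (c i) * e i = 0 ->
            forall i, c i = 0)].

Definition is_genus (K F : fieldType) (phi : {rmorphism K -> F}) (g : nat) : Prop :=
  (forall (A : place phi -> int) (l : nat), divisor_fin A ->
      lin_dim phi (RR_space A) l -> div_deg A - l%:Z + 1 <= g%:Z) /\
  (exists (A : place phi -> int) (l : nat), [/\ divisor_fin A,
      lin_dim phi (RR_space A) l & div_deg A - l%:Z + 1 = g%:Z]).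

Definition card_is (T : Type) (S : T -> Prop) (n : nat) : Prop :=
  exists f : 'I_n -> T, injective f /\ forall x, S x <-> exists i, f i = x.

Definition num_eff_divisors (K F : fieldType) (phi : {rmorphism K -> F})
  (n : nat) (An : nat) : Prop :=
  card_is (fun D : place phi -> int =>
    [/\ divisor_fin D, effective D & div_deg D = n%:Z]) An.

Definition num_places (K F : fieldType) (phi : {rmorphism K -> F})
  (r : nat) (Br : nat) : Prop :=
  card_is (fun P : place phi => deg_place P = r) Br.

From HB Require Import structures.
From mathcomp Require Import all_boot all_order all_algebra.
From mathcomp Require Import zify.
From Stdlib Require List.
From Stdlib Require Import ClassicalEpsilon FunctionalExtensionality.
Set Implicit Arguments. Unset Strict Implicit. Unset Printing Implicit Defensive.
Import Order.TTheory GRing.Theory Num.Theory.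
Local Open Scope ring_scope.

(* An effective divisor of degree n <= N := g - 2 lives on the finitely many
   places of degree at most N, so it is determined by its multiplicities there.
   Grouping the places by their degree r, the multiplicities at the B_r places
   of degree r form a multiset of some size b with r b <= N, and there are at
   most C(B_r + b - 1, b) such multisets.  Hence, for every x >= 0,
   sum_(n <= N) A_n x^n is at most the product over r of the truncated series
   sum_(b <= N / r) C(B_r + b - 1, b) x^(r b); take x = 1/q. *)

Section Multisets.
Variables (T : finType) (N : nat).
Implicit Types (v : {ffun T -> 'I_N.+1}) (S : {set T}).

Definition mass v : nat := (\sum_t v t)%N.

Definition weight (deg : T -> nat) v : nat := (\sum_t deg t * v t)%N.

Definition supported_in S v : bool := [forall t, (t \notin S) ==> (v t == ord0)].

Lemma supported_inP S v : reflect (forall t, t \notin S -> v t = ord0) (supported_in S v).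
Proof.
apply: (iffP forallP) => vS t; last by apply/implyP => /vS ->.
by move=> tS; apply/eqP/(implyP (vS t)).
Qed.

Lemma mass_supported S v : supported_in S v -> mass v = (\sum_(t in S) v t)%N.
Proof.
move/supported_inP=> vS; rewrite /mass (bigID (mem S)) /= [X in (_ + X)%N]big1 ?addn0 //.
by move=> t /vS ->.
Qed.

Lemma card_supported_mass S b :
  (#|[set v | supported_in S v & mass v == b]| <= 'C(#|S| + b - 1, b))%N.
Proof.
have [S0 | /prednK eS] := posnP #|S|.
  have S_0 : S = set0 by apply/eqP; rewrite -cards_eq0 S0.
  have vE v : supported_in S v -> v = [ffun => ord0].
    by move/supported_inP=> vS; apply/ffunP => t; rewrite ffunE vS // S_0 inE.
  rewrite S0 add0n; case: b => [|b].
    rewrite bin0 -(cards1 ([ffun => ord0] : {ffun T -> 'I_N.+1})) subset_leq_card //.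
    by apply/subsetP => v; rewrite !inE => /andP[/vE -> _].
  rewrite subn1 /= bin_small // leqn0 cards_eq0; apply/eqP/setP => v; rewrite !inE.
  apply/negbTE/negP => /andP[/vE -> /eqP].
  by rewrite /mass big1 // => t _; rewrite ffunE.
set m := #|S|.-1 in eS.
rewrite -eS addSn subn1 /= -[X in 'C(_, X)](addKn m b) bin_sub ?leq_addr //.
rewrite -card_ord_partitions.
pose h v : m.+1.-tuple 'I_b.+1 :=
  [tuple (inord (v (enum_val (cast_ord eS k))) : 'I_b.+1) | k < m.+1].
pose V := [set v | supported_in S v & mass v == b].
have inV v : (v \in V) = supported_in S v && (mass v == b) by rewrite inE.
have le_b v : v \in V -> forall t, (v t <= b)%N.
  by rewrite inV => /andP[_ /eqP <-] t; rewrite /mass (bigD1 t) //= leq_addr.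
have sum_h v : v \in V -> (\sum_(k <- h v) k = mass v)%N.
  move=> vV; have /andP[vS _] : supported_in S v && (mass v == b) by rewrite -inV.
  rewrite big_tuple (mass_supported vS) (big_enum_val (fun t => nat_of_ord (v t))) /=.
  rewrite [RHS](reindex (cast_ord eS)) /=; last first.
    by exists (cast_ord (esym eS)) => k _; rewrite ?cast_ordK ?cast_ordKV.
  by apply: eq_bigr => k _; rewrite tnth_mktuple inordK // ltnS le_b.
rewrite -(card_in_imset (f := h) (D := mem V)); last first.
  move=> v w vV wV /= hvw; apply/ffunP => t; apply/val_inj.
  have /andP[/supported_inP vS _] : supported_in S v && (mass v == b) by rewrite -inV.
  have /andP[/supported_inP wS _] : supported_in S w && (mass w == b) by rewrite -inV.
  have [tS | tS] := boolP (t \in S); last by rewrite vS // wS.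
  have := congr1 (fun s : m.+1.-tuple _ =>
    nat_of_ord (tnth s (cast_ord (esym eS) (enum_rank_in tS t)))) hvw.
  by rewrite /= !tnth_mktuple cast_ordKV enum_rankK_in // !inordK // ltnS le_b.
apply: subset_leq_card; apply/subsetP => _ /imsetP[v vV ->].
by rewrite inE sum_h //; move: vV; rewrite inV => /andP[].
Qed.

Section Slices.
Variable deg : T -> nat.
Hypothesis deg_range : forall t, (0 < deg t <= N)%N.

Definition slices v : {ffun 'I_N -> {ffun T -> 'I_N.+1}} :=
  [ffun i : 'I_N => [ffun t => if deg t == i.+1 then v t else ord0]].

Lemma deg_ord t : {i : 'I_N | deg t = i.+1}.
Proof.
have /andP[deg_gt0 deg_le] := deg_range t.
have lt_N : ((deg t).-1 < N)%N by rewrite (leq_trans _ deg_le) // ltn_predL.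
by exists (Ordinal lt_N); rewrite /= prednK.
Qed.

Lemma slices_supported v (i : 'I_N) : supported_in [set t | deg t == i.+1] (slices v i).
Proof. by apply/supported_inP => t; rewrite !inE !ffunE => /negbTE ->. Qed.

Lemma weight_slices v : weight deg v = (\sum_(i < N) i.+1 * mass (slices v i))%N.
Proof.
rewrite /weight /mass; under [RHS]eq_bigr do rewrite big_distrr /=.
rewrite exchange_big; apply: eq_bigr => t _ /=; have [i deg_t] := deg_ord t.
rewrite (bigD1 i) //= big1 => [|j j_neq]; rewrite !ffunE deg_t ?eqxx ?addn0 //.
by rewrite eqSS (inj_eq val_inj) eq_sym (negbTE j_neq) muln0.
Qed.

Lemma slices_inj : injective slices.
Proof.
move=> v w vw; apply/ffunP => t; have [i deg_t] := deg_ord t.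
have := congr1 (fun f : {ffun 'I_N -> {ffun T -> 'I_N.+1}} => f i t) vw.
by rewrite !ffunE deg_t eqxx.
Qed.

End Slices.

End Multisets.

Section GeneratingBound.
Variables (R : numDomainType) (x : R).
Hypothesis x_ge0 : 0 <= x.

Lemma sum_card_fibers (I : finType) (P : pred I) (s : I -> nat) (F : nat -> R) K :
  \sum_(i | P i && (s i < K)%N) F (s i)
  = \sum_(0 <= b < K) #|[set i | P i & s i == b]|%:R * F b.
Proof.
rewrite big_mkcondr /=.
have sum_eq i : (if (s i < K)%N then F (s i) else 0)
    = \sum_(0 <= b < K) if b == s i then F b else 0.
  by rewrite -big_mkcond big_nat1_eq.
under eq_bigr do rewrite sum_eq.
rewrite exchange_big /=; apply: eq_bigr => b _.
rewrite -big_mkcondr /= -sum1dep_card natr_sum mulr_suml.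
by apply: eq_big => [i | i /andP[_ /eqP ->]]; rewrite ?mul1r // eq_sym.
Qed.

Lemma sum_supported_mass_pow (T : finType) N (S : {set T}) r : (0 < r)%N ->
  \sum_(v : {ffun T -> 'I_N.+1} | supported_in S v && (r * mass v <= N)%N) x ^+ (r * mass v)
  <= \sum_(0 <= b < (N %/ r).+1) 'C(#|S| + b - 1, b)%:R * x ^+ (r * b).
Proof.
move=> r_gt0.
have le_div v : (r * mass v <= N)%N = (mass v < (N %/ r).+1)%N.
  by rewrite ltnS leq_divRL // mulnC.
under eq_bigl do rewrite le_div.
rewrite (sum_card_fibers _ _ (fun b => x ^+ (r * b))).
apply: ler_sum_nat => b _; rewrite ler_wpM2r ?exprn_ge0 // ler_nat.
exact: card_supported_mass.
Qed.

Lemma sum_bin_empty_series K r :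
  \sum_(0 <= b < K.+1) 'C(0 + b - 1, b)%:R * x ^+ (r * b) = 1 :> R.
Proof.
rewrite big_ltn // big_nat big1 => [|b /andP[b_gt0 _]].
  by rewrite muln0 expr0 mulr1 bin0 addr0.
by rewrite add0n bin_small ?mul0r // subn1 prednK.
Qed.

Lemma sum_weight_pow_le (T : finType) N (deg : T -> nat) :
  (forall t, 0 < deg t <= N)%N ->
  \sum_(0 <= n < N.+1) #|[set v : {ffun T -> 'I_N.+1} | weight deg v == n]|%:R * x ^+ n
  <= \prod_(1 <= r < N.+1 | (0 < #|[set t | deg t == r]|)%N)
       \sum_(0 <= b < (N %/ r).+1) 'C(#|[set t | deg t == r]| + b - 1, b)%:R * x ^+ (r * b).
Proof.
move=> deg_range.
pose slot (i : 'I_N) := [set t | deg t == i.+1].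
pose G (i : 'I_N) (w : {ffun T -> 'I_N.+1}) :=
  if supported_in (slot i) w && (i.+1 * mass w <= N)%N then x ^+ (i.+1 * mass w) else 0.
have G_ge0 i w : 0 <= G i w by rewrite /G; case: ifP; rewrite ?exprn_ge0.
have prodG_ge0 (f : {ffun 'I_N -> {ffun T -> 'I_N.+1}}) : 0 <= \prod_i G i (f i).
  exact: prodr_ge0.
(* Each slice of a [v] of weight at most N is capped separately; this is what
   truncates the factor of degree r at b <= N %/ r. *)
rewrite -(sum_card_fibers predT (weight deg) (fun n => x ^+ n)).
apply: le_trans (_ : _ <= \sum_v \prod_i G i (slices deg v i)) _.
  rewrite [leRHS](bigID (fun v => weight deg v < N.+1)%N) /=.
  apply: ler_wpDr; first exact: sumr_ge0.
  apply: ler_sum => v w_le; rewrite weight_slices // -prodrXr; apply: ler_prod => i _.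
  rewrite exprn_ge0 //= /G slices_supported ifT //.
  by rewrite -ltnS (leq_ltn_trans _ w_le) // weight_slices // (bigD1 i) //= leq_addr.
apply: le_trans
  (_ : _ <= \sum_(f : {ffun 'I_N -> {ffun T -> 'I_N.+1}}) \prod_i G i (f i)) _.
  rewrite -(big_imset (fun f : {ffun 'I_N -> _} => \prod_i G i (f i))
    (in2W (slices_inj deg_range))) /=.
  by rewrite [leRHS](bigID (mem (slices deg @: predT))) /= lerDl sumr_ge0.
rewrite -bigA_distr_bigA /= [leRHS]big_mkcond big_add1 big_mkord /=.
apply: ler_prod => i _; rewrite sumr_ge0 //= -big_mkcond /=.
case: posnP => [slot_empty | _]; last exact: sum_supported_mass_pow.
have := sum_supported_mass_pow N (slot i) (ltn0Sn i).
by rewrite /slot slot_empty sum_bin_empty_series.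
Qed.

End GeneratingBound.

Lemma In_mem (T : eqType) (x : T) (s : seq T) : List.In x s <-> x \in s.
Proof.
elim: s => [|y s IH] //=; rewrite in_cons; split.
  by case=> [->|/IH ->]; rewrite ?eqxx ?orbT.
by case/orP => [/eqP ->|/IH]; [left|right].
Qed.

Lemma NoDup_uniq (T : eqType) (s : seq T) : List.NoDup s <-> uniq s.
Proof.
elim: s => [|y s IH] /=; first by split => // _; constructor.
rewrite List.NoDup_cons_iff IH; split.
  by case=> h1 h2; rewrite h2 andbT; apply/negP => /In_mem.
by case/andP => h1 h2; split => //; move/In_mem; apply/negP.
Qed.

Lemma card_tag_eq (I : finType) (J : I -> finType) (i : I) :
  #|[set p : {i : I & J i} | tag p == i]| = #|J i|.
Proof.
rewrite -(card_imset _ (@eq_from_Tagged I J i)); apply: eq_card => p.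
rewrite !inE; apply/eqP/imsetP => [|[j _ ->] //].
by case: p => i' j /= <-; exists j.
Qed.

Section Divisors.
Variables (K F : fieldType) (phi : {rmorphism K -> F}).

Definition place_eqb (P Q : place phi) : bool :=
  if excluded_middle_informative (P = Q) then true else false.

Lemma place_eqP : Equality.axiom place_eqb.
Proof. by move=> P Q; rewrite /place_eqb; case: excluded_middle_informative; constructor. Qed.

HB.instance Definition _ := hasDecEq.Build (place phi) place_eqP.

Implicit Types (D : place phi -> int) (P : place phi).

Lemma div_degE D s : divisor_fin D -> uniq s -> (forall P, D P != 0 -> P \in s) ->
  div_deg D = \sum_(P <- s) D P * (deg_place P)%:Z.
Proof.
move=> [s0 s0_supp] s_uniq s_supp.
have : exists d : int, exists s1 : seq (place phi), [/\ List.NoDup s1,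
    (forall P, D P <> 0 -> List.In P s1) & d = \sum_(P <- s1) D P * (deg_place P)%:Z].
  exists (\sum_(P <- undup s0) D P * (deg_place P)%:Z), (undup s0); split => //.
    by apply/NoDup_uniq; rewrite undup_uniq.
  by move=> P /s0_supp /In_mem; rewrite -mem_undup => /In_mem.
move/(epsilon_spec (inhabits 0)); rewrite -/(div_deg D).
case=> s1 [/NoDup_uniq s1_uniq s1_supp ->]; apply: perm_big_supp.
apply: uniq_perm; rewrite ?filter_uniq // => P; rewrite !mem_filter.
have [-> | DP0] := eqVneq (D P) 0; first by rewrite mul0r eqxx.
by rewrite s_supp //; move/eqP: DP0 => /s1_supp /In_mem ->.
Qed.

Lemma effective_le_div_deg D P : divisor_fin D -> effective D ->
  D P * (deg_place P)%:Z <= div_deg D.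
Proof.
move=> [s0 s0_supp] D_ge0.
have supp_s0 Q : D Q != 0 -> Q \in undup s0.
  by move=> /eqP /s0_supp /In_mem; rewrite mem_undup.
rewrite (@div_degE D (undup s0)) ?undup_uniq //; last by exists s0.
have terms_ge0 Q : 0 <= D Q * (deg_place Q)%:Z by rewrite mulr_ge0.
have [-> | /supp_s0 Ps0] := eqVneq (D P) 0; first by rewrite mul0r sumr_ge0.
by rewrite (bigD1_seq P) ?undup_uniq //= lerDl sumr_ge0.
Qed.

(* A place P of degree 0 would make all the k P effective of degree 0. *)
Lemma deg_place_gt0 a : num_eff_divisors phi 0 a -> forall P, (0 < deg_place P)%N.
Proof.
move=> [f [_ f_onto]] P; rewrite lt0n; apply/eqP => degP0.
pose mult (k : nat) Q : int := if Q == P then k%:Z else 0.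
have mult_fin k : divisor_fin (mult k).
  by exists [:: P] => Q; rewrite /mult; case: eqP => [-> | //]; left.
have mult_in k : exists i, f i = mult k.
  apply/f_onto; split => //; first by move=> Q; rewrite /mult; case: eqP.
  rewrite (@div_degE _ [:: P]) ?big_seq1 ?degP0 ?mulr0 // => Q.
  by rewrite /mult mem_seq1; case: (Q == P); rewrite ?eqxx.
have : (size (iota 0 a.+1) <= size [seq `|f i P|%N | i <- enum 'I_a])%N.
  apply: uniq_leq_size; first exact: iota_uniq.
  move=> k _; have [i fi] := mult_in k; apply/mapP; exists i; first by rewrite mem_enum.
  by rewrite fi /mult eqxx.
by rewrite size_iota size_map size_enum_ord ltnn.
Qed.

Lemma enum_places_upto (B : nat -> nat) N :
  (forall r, (1 <= r)%N -> num_places phi r (B r)) ->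
  exists E : {i : 'I_N & 'I_(B i.+1)} -> place phi,
  [/\ injective E, forall p, deg_place (E p) = (tag p).+1
    & forall P, (0 < deg_place P <= N)%N -> exists p, E p = P].
Proof.
move=> num_B.
pose e i := sval (constructive_indefinite_description _ (num_B i.+1 isT)).
have e_spec i : injective (e i) /\ forall P, deg_place P = i.+1 <-> exists j, e i j = P.
  exact: svalP (constructive_indefinite_description _ (num_B i.+1 isT)).
have e_inj i := (e_spec i).1; have e_onto i := (e_spec i).2.
have deg_e i j : deg_place (e i j) = i.+1 by apply/(e_onto i); exists j.
exists (fun p : {i : 'I_N & 'I_(B i.+1)} => e (tag p) (tagged p)); split.
- move=> [i j] [i' j'] /= eq_e; have := congr1 (@deg_place _ _ phi) eq_e.
  rewrite !deg_e => -[/val_inj eq_i]; subst i'.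
  by rewrite (e_inj _ _ _ eq_e).
- by move=> [i j]; rewrite deg_e.
move=> P /andP[deg_gt0 deg_le].
have lt_N : ((deg_place P).-1 < N)%N by rewrite (leq_trans _ deg_le) // ltn_predL.
have [j <-] : exists j, e (Ordinal lt_N) j = P by apply/e_onto; rewrite prednK.
by exists (Tagged (fun i : 'I_N => 'I_(B i.+1)) j).
Qed.

Definition eff_divisor n D : Prop := [/\ divisor_fin D, effective D & div_deg D = n%:Z].

Section Encoding.
Variables (N : nat) (T : finType) (E : T -> place phi).
Hypotheses (E_inj : injective E)
  (E_onto : forall P, (0 < deg_place P <= N)%N -> exists t, E t = P)
  (deg_gt0 : forall P, (0 < deg_place P)%N).

Definition encode D : {ffun T -> 'I_N.+1} := [ffun t => inord `|D (E t)|].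

Lemma support_eff_divisor n D P : eff_divisor n D -> (n <= N)%N -> D P != 0 ->
  [/\ (deg_place P <= N)%N, (`|D P| <= N)%N & exists t, E t = P].
Proof.
case=> D_fin D_ge0 deg_D n_le DP0; have := effective_le_div_deg P D_fin D_ge0.
have := deg_gt0 P; have := D_ge0 P; rewrite deg_D.
case: (D P) DP0 => // d d_neq0 _ deg_P_gt0; rewrite -PoszM lez_nat => le_n.
have deg_P_le : (deg_place P <= N)%N by nia.
by split; [ | nia | apply: E_onto; rewrite deg_P_gt0].
Qed.

Lemma abs_eff_divisor_le n D P : eff_divisor n D -> (n <= N)%N -> (`|D P| <= N)%N.
Proof.
move=> D_eff n_le; have [-> // | DP0] := eqVneq (D P) 0.
by case: (support_eff_divisor D_eff n_le DP0).
Qed.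

Lemma weight_encode n D : eff_divisor n D -> (n <= N)%N ->
  weight (fun t => deg_place (E t)) (encode D) = n.
Proof.
move=> D_eff n_le; have [D_fin D_ge0 deg_D] := D_eff.
apply/eqP; rewrite -eqz_nat -deg_D (@div_degE D [seq E t | t <- enum T]) //; last 2 first.
- by rewrite map_inj_uniq // enum_uniq.
- move=> P DP0; have [_ _ [t <-]] := support_eff_divisor D_eff n_le DP0.
  by rewrite map_f // mem_enum.
rewrite big_map big_enum /= /weight -natz natr_sum; apply/eqP/eq_bigr => t _.
rewrite ffunE inordK ?ltnS ?(abs_eff_divisor_le _ D_eff) //.
by rewrite natrM mulrC !natz gez0_abs.
Qed.

Lemma encode_inj_eff n D1 D2 : eff_divisor n D1 -> eff_divisor n D2 -> (n <= N)%N ->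
  encode D1 = encode D2 -> D1 = D2.
Proof.
move=> D1_eff D2_eff n_le eq_enc; apply: functional_extensionality => P.
have agree t : D1 (E t) = D2 (E t).
  have [[_ D1_ge0 _] [_ D2_ge0 _]] := (D1_eff, D2_eff).
  have := congr1 (fun u : {ffun T -> 'I_N.+1} => nat_of_ord (u t)) eq_enc.
  rewrite /= !ffunE !inordK ?ltnS ?(abs_eff_divisor_le _ D1_eff)
    ?(abs_eff_divisor_le _ D2_eff) //.
  by move=> eq_abs; rewrite -[LHS]gez0_abs // -[RHS]gez0_abs // eq_abs.
have E_supp D : eff_divisor n D -> D P != 0 -> exists t, E t = P.
  by move=> D_eff /(support_eff_divisor D_eff n_le) [].
have [D1P0 | /(E_supp _ D1_eff) [t <-]] := eqVneq (D1 P) 0; last exact: agree.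
have [-> // | /(E_supp _ D2_eff) [t <-]] := eqVneq (D2 P) 0; exact: agree.
Qed.

Lemma card_eff_divisors_le n An : (n <= N)%N -> num_eff_divisors phi n An ->
  (An <= #|[set u : {ffun T -> 'I_N.+1} | weight (fun t => deg_place (E t)) u == n]|)%N.
Proof.
move=> n_le [f [f_inj f_eff]].
have eff_f i : eff_divisor n (f i) by apply/f_eff; exists i.
have encode_f_inj : injective (fun i => encode (f i)).
  by move=> i j /(encode_inj_eff (eff_f i) (eff_f j) n_le) /f_inj.
rewrite -[An]card_ord -(card_imset _ encode_f_inj); apply: subset_leq_card.
by apply/subsetP => _ /imsetP[i _ ->]; rewrite inE (weight_encode (eff_f i)).
Qed.

End Encoding.

End Divisors.

Theorem theorem3p9 (q : nat) (K : finFieldType) (F : fieldType)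
  (phi : {rmorphism K -> F}) (g : nat) (A B : nat -> nat) :
  #|K| = q ->
  function_field phi -> full_constant_field phi ->
  is_genus phi g -> (2 <= g)%N ->
  (forall n, num_eff_divisors phi n (A n)) ->
  (forall r, (1 <= r)%N -> num_places phi r (B r)) ->
  (q%:Q) ^+ (g - 1) * (\sum_(0 <= n < (g - 2).+1) (A n)%:Q / (q%:Q) ^+ n)
  <= (q%:Q) ^+ (g - 1) *
     \prod_(1 <= r < (g - 2).+1 | (1 <= B r)%N)
       (\sum_(0 <= b < ((g - 2) %/ r).+1)
          ('C(B r + b - 1, b))%:Q / (q%:Q) ^+ (r * b)).
Proof.
move=> _ _ _ _ _ num_A num_B; set N := (g - 2)%N.
have [E [E_inj deg_E E_onto]] := enum_places_upto N num_B.
have deg_gt0 := deg_place_gt0 (num_A 0%N).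
have deg_range p : (0 < deg_place (E p) <= N)%N by rewrite deg_E ltn_ord.
have card_deg r : (0 < r <= N)%N -> #|[set p | deg_place (E p) == r]| = B r.
  case: r => // r /= r_lt.
  transitivity #|[set p : {i : 'I_N & 'I_(B i.+1)} | tag p == Ordinal r_lt]|.
    by apply: eq_card => p; rewrite !inE deg_E eqSS.
  by rewrite card_tag_eq card_ord.
have x_ge0 : 0 <= (q%:Q)^-1 by rewrite invr_ge0.
apply: ler_wpM2l; first by rewrite exprn_ge0.
under [leLHS]eq_bigr => n _ do rewrite -exprVn.
under [leRHS]eq_bigr => r _ do under eq_bigr => b _ do rewrite -exprVn.
apply: le_trans (le_trans _ (sum_weight_pow_le x_ge0 deg_range)) _.
  apply: ler_sum_nat => n /andP[_ n_le]; rewrite ler_wpM2r ?exprn_ge0 // -pmulrn ler_nat.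
  exact: card_eff_divisors_le.
rewrite big_nat_cond [leRHS]big_nat_cond le_eqVlt; apply/predU1l.
apply: eq_big => [r | r /andP[/card_deg -> //]].
by case/boolP: (0 < r < N.+1)%N => //= /card_deg ->.
Qed.
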